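(* For any directed graph $G=(V,E,w)$ with edge weights $w:E\to\mathbb{R}_+$ and vertex weights $\pi:V\to\mathbb{R}_+$, $\lambda^{\triangle}_\pi(G)\le 2\,\vec\phi_\pi(G)$.
   Context: Let $n=|V|$. $\vec\phi_\pi(G)=\min_{\emptyset\ne S\subsetneq V}\frac{\min\{w(\delta^+(S)),w(\delta^-(S))\}}{\min\{\pi(S),\pi(\overline S)\}}$, where $\delta^+(S)$ / $\delta^-(S)$ are the edges leaving / entering $S$ and $\pi(S)=\sum_{i\in S}\pi(i)$. $\mathcal F(G)$ is the set of circulations $F:E\to\mathbb{R}_{\ge0}$ with $F(e)\le w(e)$ ($F(i,j)=0$ if $ij\notin E$). $\lambda^{\triangle}_\pi(G)=\min\max_{F\in\mathcal F(G)}\sum_{i<j}\frac12(F(i,j)+F(j,i))\|v_i-v_j\|^2$, the min over $v_1,\dots,v_n\in\mathbb{R}^n$ with $\sum_i\pi(i)v_i=0$, $\sum_i\pi(i)\|v_i\|^2=1$, and $\|v_i-v_k\|^2+\|v_k-v_j\|^2\ge\|v_i-v_j\|^2$ for all $i,j,k$. *)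

From HB Require Import structures.
From mathcomp Require Import all_boot all_order all_algebra.
From mathcomp Require Import boolp classical_sets reals.
Set Implicit Arguments. Unset Strict Implicit. Unset Printing Implicit Defensive.
Import Order.TTheory GRing.Theory Num.Theory.
Local Open Scope ring_scope.
Local Open Scope classical_set_scope.

Section Defs.
Variables (R : realType) (n : nat).
(* Vertex set V = 'I_n.  Edge set E : rel 'I_n (directed pairs (i,j)),
   edge weights w i j (meaningful for E i j), vertex weights pi. *)
Variables (E : rel 'I_n) (w : 'I_n -> 'I_n -> R) (pi : 'I_n -> R).

Definition wout (S : {set 'I_n}) : R :=
  \sum_(i in S) \sum_(j in ~: S | E i j) w i j.
Definition win (S : {set 'I_n}) : R :=
  \sum_(i in ~: S) \sum_(j in S | E i j) w i j.
Definition piS (S : {set 'I_n}) : R := \sum_(i in S) pi i.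

Definition cond_ratio (S : {set 'I_n}) : R :=
  Num.min (wout S) (win S) / Num.min (piS S) (piS (~: S)).

Definition dir_conductance : R :=
  inf [set r | exists S : {set 'I_n}, [/\ (0 < #|S|)%N, (#|S| < n)%N & r = cond_ratio S]].

Definition is_circulation (F : 'I_n -> 'I_n -> R) : Prop :=
  [/\ (forall i j, 0 <= F i j),
      (forall i j, E i j -> F i j <= w i j),
      (forall i j, ~~ E i j -> F i j = 0) &
      (forall i, \sum_j F i j = \sum_j F j i)].

Definition sqdist (x y : 'rV[R]_n) : R := \sum_(k < n) (x 0 k - y 0 k) ^+ 2.
Definition sqnorm (x : 'rV[R]_n) : R := \sum_(k < n) (x 0 k) ^+ 2.

Definition feasible_vecs (v : 'I_n -> 'rV[R]_n) : Prop :=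
  [/\ \sum_i pi i *: v i = 0,
      \sum_i pi i * sqnorm (v i) = 1 &
      (forall i j k, sqdist (v i) (v k) + sqdist (v k) (v j) >= sqdist (v i) (v j))].

Definition sdp_obj (F : 'I_n -> 'I_n -> R) (v : 'I_n -> 'rV[R]_n) : R :=
  \sum_(i < n) \sum_(j < n | (i < j)%N) 2^-1 * (F i j + F j i) * sqdist (v i) (v j).

Definition sdp_value (v : 'I_n -> 'rV[R]_n) : R :=
  sup [set y | exists F, is_circulation F /\ y = sdp_obj F v].

Definition lambda_tri : R :=
  inf [set x | exists v, feasible_vecs v /\ x = sdp_value v].
End Defs.

From HB Require Import structures.
From mathcomp Require Import all_boot all_order all_algebra.
From mathcomp Require Import boolp classical_sets reals.
From mathcomp Require Import ring zify.
Set Implicit Arguments. Unset Strict Implicit. Unset Printing Implicit Defensive.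
Import Order.TTheory GRing.Theory Num.Theory.
Local Open Scope ring_scope.

(* Every cut S yields a feasible configuration: the one-dimensional vectors
   taking the value pi(S^c) on S and -pi(S) off S, suitably normalised.  Their
   squared distance is 1/pi(S) + 1/pi(S^c) across the cut and 0 inside, so the
   objective of any circulation is that constant times the flow across S.  By
   flow conservation the flow leaving S equals the flow entering it, hence it
   is bounded by min(w(delta^+ S), w(delta^- S)); and 1/a + 1/b <= 2/min(a, b). *)

Section Configurations.
Variables (R : realType) (n : nat).
Implicit Types (x y z : 'rV[R]_n) (S : {set 'I_n}).

Lemma sqdist_ge0 x y : 0 <= sqdist x y.
Proof. by apply: sumr_ge0 => k _; apply: sqr_ge0. Qed.

Lemma sqdistxx x : sqdist x x = 0.
Proof. by apply: big1 => k _; rewrite subrr expr0n. Qed.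

Lemma sqdistC x y : sqdist x y = sqdist y x.
Proof. by apply: eq_bigr => k _; rewrite -sqrrN opprB. Qed.

Lemma sqdist_triangle_degenerate x y z : [\/ x = y, y = z | x = z] ->
  sqdist x z <= sqdist x y + sqdist y z.
Proof.
case=> [->|->|->]; rewrite ?sqdistxx ?add0r ?addr0 //.
by rewrite addr_ge0 ?sqdist_ge0.
Qed.

Lemma sqdist_const (a b : R) :
  sqdist (const_mx a : 'rV[R]_n) (const_mx b) = n%:R * (a - b) ^+ 2.
Proof.
rewrite /sqdist; under eq_bigr do rewrite !mxE.
by rewrite sumr_const card_ord mulr_natl.
Qed.

Lemma sqnorm_const (a : R) : sqnorm (const_mx a : 'rV[R]_n) = n%:R * a ^+ 2.
Proof.
rewrite /sqnorm; under eq_bigr do rewrite !mxE.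
by rewrite sumr_const card_ord mulr_natl.
Qed.

Lemma sum_split_setC S (f : 'I_n -> R) :
  \sum_i f i = \sum_(i in S) f i + \sum_(i in ~: S) f i.
Proof.
rewrite (bigID (mem S)) /=; congr (_ + _); apply: eq_bigl => i.
by rewrite !inE.
Qed.

Lemma sum_ltn_pairs (h : 'I_n -> 'I_n -> R) : (forall i, h i i = 0) ->
  \sum_(i < n) \sum_(j < n | (i < j)%N) (h i j + h j i) = \sum_i \sum_j h i j.
Proof.
move=> h_diag; under eq_bigr do rewrite big_split /=.
rewrite big_split /=.
have -> : \sum_(i < n) \sum_(j < n | (i < j)%N) h j i
    = \sum_(i < n) \sum_(j < n) (if (j < i)%N then h i j else 0).
  by under eq_bigr do rewrite big_mkcond /=; rewrite exchange_big.
rewrite -big_split /=; apply: eq_bigr => i _.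
rewrite big_mkcond -big_split /=; apply: eq_bigr => j _.
case: (ltngtP i j) => [_|_|/val_inj ->]; first by rewrite addr0.
  by rewrite add0r.
by rewrite h_diag addr0.
Qed.

Lemma sdp_objE (F : 'I_n -> 'I_n -> R) (v : 'I_n -> 'rV[R]_n) :
  sdp_obj F v = 2^-1 * \sum_i \sum_j F i j * sqdist (v i) (v j).
Proof.
rewrite -sum_ltn_pairs => [|i]; last by rewrite sqdistxx mulr0.
rewrite mulr_sumr; apply: eq_bigr => i _; rewrite mulr_sumr.
by apply: eq_bigr => j _; rewrite (sqdistC (v j)); ring.
Qed.

Definition cut_flow (F : 'I_n -> 'I_n -> R) S : R :=
  \sum_(i in S) \sum_(j in ~: S) F i j.

Lemma cut_flowC (F : 'I_n -> 'I_n -> R) S :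
  (forall i, \sum_j F i j = \sum_j F j i) -> cut_flow F (~: S) = cut_flow F S.
Proof.
move=> conservation; rewrite /cut_flow finset.setCK.
have : \sum_(i in S) \sum_j F i j = \sum_(i in S) \sum_j F j i.
  by apply: eq_bigr => i _; apply: conservation.
under eq_bigr do rewrite (sum_split_setC S).
under [X in _ = X -> _]eq_bigr do rewrite (sum_split_setC S).
rewrite !big_split /= [X in _ = X + _]exchange_big.
by rewrite [X in _ = _ + X]exchange_big /= => /addrI.
Qed.

Lemma sdp_obj_cut (F : 'I_n -> 'I_n -> R) (v : 'I_n -> 'rV[R]_n) S (d : R) :
  (forall i, \sum_j F i j = \sum_j F j i) ->
  (forall i j, sqdist (v i) (v j) = if (i \in S) == (j \in S) then 0 else d) ->
  sdp_obj F v = d * cut_flow F S.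
Proof.
move=> conservation v_cut; rewrite sdp_objE (sum_split_setC S).
have -> : \sum_(i in S) \sum_j F i j * sqdist (v i) (v j) = d * cut_flow F S.
  rewrite /cut_flow mulr_sumr; apply: eq_bigr => i iS.
  rewrite (sum_split_setC S) big1 ?add0r => [|j jS]; last first.
    by rewrite v_cut iS jS /= mulr0.
  rewrite mulr_sumr; apply: eq_bigr => j; rewrite inE => /negbTE jS.
  by rewrite v_cut iS jS /= mulrC.
have -> : \sum_(i in ~: S) \sum_j F i j * sqdist (v i) (v j)
    = d * cut_flow F (~: S).
  rewrite /cut_flow finset.setCK mulr_sumr; apply: eq_bigr => i.
  rewrite inE => /negbTE iS.
  rewrite (sum_split_setC S) [X in _ + X]big1 ?addr0 => [|j]; last first.
    by rewrite inE => /negbTE jS; rewrite v_cut iS jS /= mulr0.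
  rewrite mulr_sumr; apply: eq_bigr => j jS.
  by rewrite v_cut iS jS /= mulrC.
by rewrite cut_flowC //; field.
Qed.

Lemma sdp_obj0 (v : 'I_n -> 'rV[R]_n) : sdp_obj (fun _ _ => 0) v = 0.
Proof.
by rewrite sdp_objE big1 ?mulr0 // => i _; rewrite big1 // => j; rewrite mul0r.
Qed.

End Configurations.

Lemma invr_add_le_min (R : realFieldType) (a b : R) : 0 < a -> 0 < b ->
  a^-1 + b^-1 <= 2 / Num.min a b.
Proof.
move=> a_gt0 b_gt0; have m_gt0 : 0 < Num.min a b by rewrite lt_min a_gt0.
rewrite mulr_natl mulr2n lerD // lef_pV2 ?posrE ?ge_min ?lexx ?orbT //.
Qed.

Section Cuts.
Variables (R : realType) (n : nat) (E : rel 'I_n).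
Variables (w : 'I_n -> 'I_n -> R) (pi : 'I_n -> R).
Hypothesis w_ge0 : forall i j, E i j -> 0 <= w i j.
Hypothesis pi_gt0 : forall i, 0 < pi i.
Implicit Types (S A B : {set 'I_n}) (F : 'I_n -> 'I_n -> R).

Lemma sum_flow_le_capacity F A B : is_circulation E w F ->
  \sum_(i in A) \sum_(j in B) F i j
    <= \sum_(i in A) \sum_(j in B | E i j) w i j.
Proof.
case=> _ F_le_w F_off_E _; apply: ler_sum => i _.
rewrite (bigID (E i)) /= [X in _ + X]big1 ?addr0 => [|j /andP[_ /F_off_E]] //.
by apply: ler_sum => j /andP[_ /F_le_w].
Qed.

Lemma cut_flow_le_min F S : is_circulation E w F ->
  cut_flow F S <= Num.min (wout E w S) (win E w S).
Proof.
move=> F_circ; rewrite le_min; apply/andP; split.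
  exact: sum_flow_le_capacity.
have [_ _ _ /(cut_flowC S) <-] := F_circ; rewrite /cut_flow finset.setCK.
exact: sum_flow_le_capacity.
Qed.

Lemma is_circulation0 : is_circulation E w (fun _ _ => 0).
Proof. by split=> // i j /w_ge0. Qed.

Lemma sdp_value_ge0 (v : 'I_n -> 'rV[R]_n) : 0 <= sdp_value E w v.
Proof.
rewrite /sdp_value; set A := (X in sup X).
have A0 : A 0.
  by exists (fun _ _ => 0); rewrite sdp_obj0; split=> //; apply: is_circulation0.
have [A_ub|A_unb] := pselect (has_ubound A); first exact: ub_le_sup.
by rewrite sup_out // => -[].
Qed.

Lemma lambda_tri_le_sdp_value (v : 'I_n -> 'rV[R]_n) : feasible_vecs pi v ->
  lambda_tri E w pi <= sdp_value E w v.
Proof.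
move=> v_feas; apply: ge_inf; last by exists v.
by exists 0 => _ [u [_ ->]]; apply: sdp_value_ge0.
Qed.

Lemma piS_gt0 A : (0 < #|A|)%N -> 0 < piS pi A.
Proof.
case/card_gt0P=> i iA; rewrite /piS (bigD1 i) //= ltr_pwDl //.
by apply: sumr_ge0 => j _; apply: ltW.
Qed.

Section CutEmbedding.
Variable S : {set 'I_n}.
Hypotheses (S_gt0 : (0 < #|S|)%N) (S_ltn : (#|S| < n)%N).

Let p := piS pi S.
Let q := piS pi (~: S).

Let p_gt0 : 0 < p. Proof. exact: piS_gt0. Qed.

Let q_gt0 : 0 < q.
Proof. by apply: piS_gt0; move: (cardsC S); rewrite card_ord; lia. Qed.

Let n_gt0 : 0 < n%:R :> R. Proof. by rewrite ltr0n; lia. Qed.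

Let scale := Num.sqrt (n%:R * p * q * (p + q)).

Let scale_sqr : scale ^+ 2 = n%:R * p * q * (p + q).
Proof. by rewrite sqr_sqrtr // ltW // !mulr_gt0 // addr_gt0. Qed.

Definition cut_embedding (i : 'I_n) : 'rV[R]_n :=
  const_mx ((if i \in S then q else - p) / scale).

Lemma cut_embedding_eq i j : (i \in S) = (j \in S) ->
  cut_embedding i = cut_embedding j.
Proof. by rewrite /cut_embedding => ->. Qed.

Lemma sqdist_cut_embedding i j :
  sqdist (cut_embedding i) (cut_embedding j)
    = if (i \in S) == (j \in S) then 0 else p^-1 + q^-1.
Proof.
rewrite sqdist_const.
case: (i \in S); case: (j \in S); rewrite /= ?subrr ?expr0n ?mulr0 //;
  rewrite -mulrBl expr_div_n scale_sqr; field;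
  by rewrite !gt_eqF ?addr_gt0.
Qed.

Lemma cut_embedding_feasible : feasible_vecs pi cut_embedding.
Proof.
split.
- apply/rowP => k; rewrite summxE !mxE (sum_split_setC S).
  under eq_bigr => i iS do rewrite !mxE iS.
  under [X in _ + X]eq_bigr => i /setCP/negP/negbTE iS do rewrite !mxE iS.
  by rewrite -!mulr_suml -/(piS pi S) -/(piS pi (~: S)) -/p -/q; ring.
- rewrite (sum_split_setC S).
  under eq_bigr => i iS do rewrite sqnorm_const iS.
  under [X in _ + X]eq_bigr => i /setCP/negP/negbTE iS
    do rewrite sqnorm_const iS.
  rewrite -!mulr_suml -/(piS pi S) -/(piS pi (~: S)) -/p -/q.
  rewrite !expr_div_n scale_sqr; field.
  by rewrite !gt_eqF ?addr_gt0.
- move=> i j k; apply: sqdist_triangle_degenerate.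
  have [ik|kj|ij] : [\/ (i \in S) = (k \in S), (k \in S) = (j \in S)
                     | (i \in S) = (j \in S)].
    by case: (i \in S); case: (j \in S); case: (k \in S);
      first [exact: Or31 | exact: Or32 | exact: Or33].
  + exact: Or31 (cut_embedding_eq ik).
  + exact: Or32 (cut_embedding_eq kj).
  + exact: Or33 (cut_embedding_eq ij).
Qed.

Lemma sdp_value_cut_embedding_le :
  sdp_value E w cut_embedding
    <= (p^-1 + q^-1) * Num.min (wout E w S) (win E w S).
Proof.
apply: ge_sup.
  by exists 0, (fun _ _ => 0); rewrite sdp_obj0; split=> //; apply: is_circulation0.
move=> _ [F [F_circ ->]]; have [_ _ _ conservation] := F_circ.
rewrite (sdp_obj_cut conservation sqdist_cut_embedding).
by rewrite ler_wpM2l ?cut_flow_le_min // addr_ge0 // invr_ge0 ltW.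
Qed.

Lemma lambda_tri_le_cond_ratio : lambda_tri E w pi <= 2 * cond_ratio E w pi S.
Proof.
apply: (le_trans (lambda_tri_le_sdp_value cut_embedding_feasible)).
apply: (le_trans sdp_value_cut_embedding_le).
have m_ge0 : 0 <= Num.min (wout E w S) (win E w S).
  by rewrite le_min !sumr_ge0 // => i _; apply: sumr_ge0 => j /andP[_ /w_ge0].
rewrite /cond_ratio mulrCA [X in X <= _]mulrC ler_wpM2l //.
exact: invr_add_le_min.
Qed.

End CutEmbedding.

End Cuts.

Theorem mainTheorem7 (R : realType) (n : nat) (E : rel 'I_n)
    (w : 'I_n -> 'I_n -> R) (pi : 'I_n -> R) :
  (1 < n)%N ->
  (forall i j, E i j -> 0 < w i j) ->
  (forall i, 0 < pi i) ->
  lambda_tri E w pi <= 2 * dir_conductance E w pi.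
Proof.
move=> n_gt1 w_gt0 pi_gt0.
have w_ge0 i j : E i j -> 0 <= w i j by move/w_gt0/ltW.
rewrite -ler_pdivrMl // mulrC; apply: lb_le_inf.
  have n_gt0 : (0 < n)%N by lia.
  exists (cond_ratio E w pi [set Ordinal n_gt0]), [set Ordinal n_gt0].
  by rewrite cards1.
move=> _ [S [S_gt0 S_ltn ->]].
by rewrite ler_pdivrMr // mulrC; apply: lambda_tri_le_cond_ratio.
Qed.
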